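(* Fix integers $n$ and $t$ with $n\ge 4$ and $3\le t\le n-1$. If $G$ is an $n$-vertex graph with minimum degree at least $1$ and $G\neq K_{1,n-1}$, then $i_t(G)<i_t(K_{1,n-1})$.
   Context: Graphs are simple, loopless and finite. $i_t(G)$ denotes the number of independent sets of size $t$ in $G$. $K_{1,n-1}$ is the star on $n$ vertices. *)

From mathcomp Require Import all_boot.
Set Implicit Arguments. Unset Strict Implicit. Unset Printing Implicit Defensive.

Definition simple_graph (n : nat) (e : rel 'I_n) : Prop :=
  symmetric e /\ irreflexive e.

Definition independent (n : nat) (e : rel 'I_n) (S : {set 'I_n}) : bool :=
  [forall x in S, forall y in S, ~~ e x y].

Definition indep_count (n : nat) (e : rel 'I_n) (t : nat) : nat :=
  #|[set S : {set 'I_n} | independent e S && (#|S| == t)]|.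

Definition degree (n : nat) (e : rel 'I_n) (v : 'I_n) : nat := #|[set w | e v w]|.

Definition star_rel (n : nat) : rel 'I_n.+1 :=
  fun x y => (x != y) && ((x == ord0) || (y == ord0)).

Definition graph_iso (n : nat) (e1 e2 : rel 'I_n) : Prop :=
  exists f : 'I_n -> 'I_n, bijective f /\ forall x y, e1 x y = e2 (f x) (f y).

From mathcomp Require Import all_boot zify perm.
Set Implicit Arguments. Unset Strict Implicit. Unset Printing Implicit Defensive.

(* Call a vertex set U good if it induces no isolated vertex, and put k = |U|.
   A nonempty good U either has a vertex c with a neighbour whose deletion
   keeps U good, or has a K_2-component {c, x}. The recurrences
     i_{t+1}(U) = i_{t+1}(U - c) + i_t(U - N[c]),   |U - N[c]| <= k - 2,
     i_{t+2}(U) = i_{t+2}(U - c - x) + 2 i_{t+1}(U - c - x)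
   and Pascal's rule give i_t(U) <= C(k-1, t) for t >= 3 by induction; the
   K_2 step at t = 3 needs the edge count bound 2 i_2(U) <= k(k-2).
   If U is not a star, one of these steps loses a set: either some vertex c
   of degree >= 2 can be deleted (then |U - N[c]| <= k - 3), or a leaf hangs
   at a vertex that is not a star centre (then U - N[c] still has an edge),
   or U has a K_2-component. *)

Lemma double_bin2 n : 2 * 'C(n, 2) = n * n.-1.
Proof. by elim: n => [|[|n] IH] //; rewrite binS bin1 mulnDr IH /=; lia. Qed.

Lemma binSS n m : 'C(n.+2, m.+2) = 'C(n, m.+2) + 2 * 'C(n, m.+1) + 'C(n, m).
Proof. by rewrite !binS; lia. Qed.

Section IndependentSets.
Variables (N : nat) (e : rel 'I_N).

Definition indep_count_in (U : {set 'I_N}) t :=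
  #|[set S : {set 'I_N} | [&& S \subset U, independent e S & #|S| == t]]|.

Definition no_isolated (U : {set 'I_N}) := [forall x in U, exists y in U, e x y].

Definition closed_nbhd c := c |: [set y | e c y].

Definition leaf_at (U : {set 'I_N}) x c := e x c && [forall w in U, e x w ==> (w == c)].

Definition star_at (U : {set 'I_N}) c :=
  [forall a in U, forall b in U, e a b == (a != b) && ((a == c) || (b == c))].

Lemma independentP (S : {set 'I_N}) :
  reflect (forall x y, x \in S -> y \in S -> ~~ e x y) (independent e S).
Proof.
apply: (iffP forall_inP) => H.
  by move=> x y xS yS; exact: (forall_inP (H x xS)) y yS.
by move=> x xS; apply/forall_inP => y yS; exact: H.
Qed.

Lemma no_isolatedP (U : {set 'I_N}) :
  reflect (forall x, x \in U -> exists2 y, y \in U & e x y) (no_isolated U).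
Proof.
apply: (iffP forall_inP) => H x xU; first by have /exists_inP := H x xU.
by apply/exists_inP; apply: H.
Qed.

Lemma leaf_atP (U : {set 'I_N}) x c :
  reflect (e x c /\ {in U, forall w, e x w -> w = c}) (leaf_at U x c).
Proof.
apply: (iffP andP) => -[exc H]; split=> //.
  by move=> w wU exw; apply/eqP; exact: (implyP (forall_inP H w wU)).
by apply/forall_inP => w wU; apply/implyP => /(H w wU) ->.
Qed.

Lemma nonleaf_nbr (U : {set 'I_N}) x c :
  e x c -> ~~ leaf_at U x c -> exists2 z, z \in U & e x z && (z != c).
Proof.
rewrite /leaf_at => -> /= /forall_inPn[z zU]; rewrite negb_imply => exz.
by exists z.
Qed.

Lemma indep_count_in_le_bin (U : {set 'I_N}) t : indep_count_in U t <= 'C(#|U|, t).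
Proof.
rewrite -cards_draws; apply: subset_leq_card; apply/subsetP => S.
by rewrite !inE => /and3P[-> _ ->].
Qed.

Hypotheses (e_sym : symmetric e) (e_irr : irreflexive e).

Lemma edge_neq x y : e x y -> x != y.
Proof. by apply: contraTneq => ->; rewrite e_irr. Qed.

Lemma card_del_edge (U : {set 'I_N}) a b :
  a \in U -> b \in U -> e a b -> #|U :\: [set a; b]|.+2 = #|U|.
Proof.
move=> aU bU eab; have sab : [set a; b] \subset U by rewrite subUset !sub1set aU bU.
have c2 : #|[set a; b]| = 2 by rewrite cards2 (edge_neq eab).
have := subset_leq_card sab; rewrite cardsD (setIidPr sab) c2; lia.
Qed.

Lemma card_del_nbr_gt0 (U : {set 'I_N}) c y :
  y \in U -> e c y -> 0 < #|U :\ c|.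
Proof.
by move=> yU ecy; rewrite card_gt0; apply/set0Pn; exists y; rewrite !inE yU eq_sym edge_neq.
Qed.

Lemma indep_count_in_lt_bin (U : {set 'I_N}) t a b :
  a \in U -> b \in U -> e a b -> 2 <= t <= #|U| -> indep_count_in U t < 'C(#|U|, t).
Proof.
move=> aU bU eab /andP[t2 tU]; have cardU' := card_del_edge aU bU eab.
have : 0 < 'C(#|U :\: [set a; b]|, t - 2) by rewrite bin_gt0; lia.
rewrite -cards_draws card_gt0 => /set0Pn[A]; rewrite inE.
case/andP => /subsetDP[sAU abA] /eqP cA.
rewrite -cards_draws; apply: proper_card; apply/properP; split.
  by apply/subsetP => S; rewrite !inE => /and3P[-> _ ->].
exists (A :|: [set a; b]).
  rewrite !inE !subUset sAU !sub1set aU bU /=.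
  by rewrite cardsU cA cards2 edge_neq // (disjoint_setI0 abA) cards0; apply/eqP; lia.
rewrite !inE; apply/negP => /and3P[_ /independentP indA _].
by have := indA a b; rewrite !inE !eqxx !orbT eab => /(_ isT isT).
Qed.

Lemma indep_count_in_del (U : {set 'I_N}) c t : c \in U ->
  indep_count_in U t.+1 =
  indep_count_in (U :\ c) t.+1 + indep_count_in (U :\: closed_nbhd c) t.
Proof.
move=> cU; set W := U :\: closed_nbhd c.
rewrite /indep_count_in -(cardsID [set S : {set 'I_N} | c \in S]) addnC.
congr (_ + _).
  apply: eq_card => S; rewrite !inE subsetD1.
  by case: (c \in S); rewrite ?andbF ?andbT //= andbC -!andbA.
have cW : c \notin W by rewrite !inE eqxx.
have notcW (B : {set 'I_N}) : B \subset W -> c \notin B.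
  by move=> sB; exact: contra (subsetP sB c) cW.
have inj : {in [set B : {set 'I_N} | [&& B \subset W, independent e B & #|B| == t]] &,
            injective (fun B => c |: B)}.
  move=> B1 B2; rewrite !inE => /and3P[s1 _ _] /and3P[s2 _ _] E.
  by rewrite -(setU1K (notcW _ s1)) -(setU1K (notcW _ s2)) E.
rewrite -(card_in_imset inj); apply: eq_card => S; rewrite !inE.
apply/andP/imsetP.
  case=> /and3P[sU /independentP iS /eqP cS] cS'.
  exists (S :\ c); last by rewrite setD1K.
  rewrite !inE; apply/and3P; split.
  - apply/subsetP => y; rewrite !inE => /andP[yc yS].
    by rewrite (negbTE yc) (subsetP sU) //= andbT; exact: iS.
  - by apply/independentP => x y; rewrite !inE => /andP[_ xS] /andP[_ yS]; exact: iS.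
  - by move: cS; rewrite (cardsD1 c) cS' add1n => -[->].
case=> B; rewrite !inE => /and3P[sB /independentP iB /eqP cB] ->.
have nc z : z \in B -> ~~ e c z.
  by move/(subsetP sB); rewrite !inE negb_or => /andP[/andP[_ ->]].
rewrite !inE eqxx; split=> //; apply/and3P; split.
- by rewrite subUset sub1set cU (subset_trans sB) ?subsetDl.
- apply/independentP => x y; rewrite !inE.
  case/orP=> [/eqP->|xB]; case/orP=> [/eqP->|yB].
  + by rewrite e_irr.
  + exact: nc.
  + by rewrite e_sym; exact: nc.
  + exact: iB.
- by rewrite cardsU1 (notcW _ sB) cB.
Qed.

Lemma card_del_closed_nbhd (U A : {set 'I_N}) c :
  A \subset U :&: [set w | e c w] -> #|U :\: closed_nbhd c| <= #|U :\ c| - #|A|.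
Proof.
move=> sA.
have sAU : A \subset U :\ c.
  apply/subsetP => w /(subsetP sA); rewrite !inE => /andP[wU ecw].
  by rewrite wU andbT eq_sym (edge_neq ecw).
rewrite -(setIidPr sAU) -cardsD; apply: subset_leq_card; apply/subsetP => w.
rewrite !inE negb_or => /andP[/andP[wc necw] wU]; rewrite wc wU !andbT /=.
by apply: contra necw => /(subsetP sA); rewrite !inE => /andP[].
Qed.

Lemma indep_count_in_nbhd_le (U A : {set 'I_N}) c t :
  A \subset U :&: [set w | e c w] ->
  indep_count_in (U :\: closed_nbhd c) t <= 'C(#|U :\ c| - #|A|, t).
Proof.
move=> sA; apply: leq_trans (indep_count_in_le_bin _ _) _.
exact/leq_bin2l/card_del_closed_nbhd.
Qed.

Lemma leaf_del_closed_nbhd (U : {set 'I_N}) x c :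
  leaf_at U x c -> U :\: closed_nbhd x = U :\ c :\ x.
Proof.
case/leaf_atP => exc Nx; apply/setP => w; rewrite !inE negb_or andbA.
case wU: (w \in U); rewrite ?andbF // !andbT; congr (_ && _).
case: (eqVneq w c) => [->|wc]; first by rewrite exc.
by apply/negP => /(Nx w wU)/eqP; rewrite (negbTE wc).
Qed.

Lemma indep_count_in_edge (U : {set 'I_N}) c x t :
  c \in U -> x \in U -> leaf_at U c x -> leaf_at U x c ->
  indep_count_in U t.+2 =
  indep_count_in (U :\: [set c; x]) t.+2 + 2 * indep_count_in (U :\: [set c; x]) t.+1.
Proof.
move=> cU xU lc lx.
have xUc : x \in U :\ c by rewrite !inE eq_sym (edge_neq (andP lc).1).
have lx' : leaf_at (U :\ c) x c.
  by case/leaf_atP: lx => exc Nx; apply/leaf_atP; split=> // w /setD1P[_ /Nx].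
rewrite (indep_count_in_del t.+1 cU) (indep_count_in_del t.+1 xUc).
rewrite (leaf_del_closed_nbhd lc) (leaf_del_closed_nbhd lx') !setDDl.
by rewrite setUA setUid [[set x; c]]setUC -addnA addnn mul2n.
Qed.

Lemma no_isolated_del_leaf (U : {set 'I_N}) x c z :
  no_isolated U -> leaf_at U x c -> z \in U -> e c z -> z != x -> no_isolated (U :\ x).
Proof.
move=> /no_isolatedP nU /leaf_atP[_ Nx] zU ecz zx; apply/no_isolatedP => v /setD1P[vx vU].
have [w wU evw] := nU v vU.
case: (eqVneq w x) => [wx|wx]; last by exists w; rewrite // !inE wx.
have vc : v = c by apply: Nx; rewrite // e_sym -wx.
by exists z; rewrite ?vc // !inE zx.
Qed.

Lemma no_isolated_del_nonleaf (U : {set 'I_N}) c :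
  no_isolated U -> ~~ [exists x in U, exists y in U, leaf_at U x y] ->
  no_isolated (U :\ c).
Proof.
move=> /no_isolatedP nU /exists_inPn nleaf; apply/no_isolatedP => v /setD1P[vc vU].
have [w wU evw] := nU v vU.
case: (eqVneq w c) => [wc|wc]; last by exists w; rewrite // !inE wc.
rewrite wc in wU evw.
have [z zU /andP[evz zc]] := nonleaf_nbr evw (exists_inPn (nleaf v vU) c wU).
by exists z; rewrite // !inE zc.
Qed.

Lemma no_isolated_del_edge (U : {set 'I_N}) c x :
  no_isolated U -> leaf_at U c x -> leaf_at U x c -> no_isolated (U :\: [set c; x]).
Proof.
move=> /no_isolatedP nU /leaf_atP[_ Nc] /leaf_atP[_ Nx]; apply/no_isolatedP => z.
rewrite !inE negb_or => /andP[/andP[zc zx] zU].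
have [w wU ezw] := nU z zU.
exists w => //; rewrite !inE wU andbT negb_or; apply/andP; split.
  by apply: contraNneq zx => wc; apply/eqP/Nc; rewrite // e_sym -wc.
by apply: contraNneq zc => wx; apply/eqP/Nx; rewrite // e_sym -wx.
Qed.

Lemma no_isolated_split (U : {set 'I_N}) : no_isolated U -> U != set0 ->
  (exists c y, [/\ c \in U, y \in U, e c y & no_isolated (U :\ c)]) \/
  (exists c x, [/\ c \in U, x \in U, leaf_at U c x & leaf_at U x c]).
Proof.
move=> nU /set0Pn[c0 c0U].
case: (boolP [exists x in U, exists y in U, leaf_at U x y]).
  case/exists_inP => x xU /exists_inP[c cU lx].
  have exc := (andP lx).1.
  case: (boolP (leaf_at U c x)) => lc; first by right; exists c, x.
  have [z zU /andP[ecz zx]] := nonleaf_nbr (etrans (e_sym _ _) exc) lc.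
  by left; exists x, c; split=> //; exact: no_isolated_del_leaf lx zU ecz zx.
move=> nleaf; left; have [y yU ecy] := no_isolatedP _ nU c0 c0U.
by exists c0, y; split=> //; exact: no_isolated_del_nonleaf.
Qed.

Lemma no_isolated_ind (P : {set 'I_N} -> Prop) :
  P set0 ->
  (forall (U : {set 'I_N}) c y, c \in U -> y \in U -> e c y ->
     no_isolated (U :\ c) -> P (U :\ c) -> P U) ->
  (forall (U : {set 'I_N}) c x, c \in U -> x \in U -> leaf_at U c x -> leaf_at U x c ->
     no_isolated (U :\: [set c; x]) -> P (U :\: [set c; x]) -> P U) ->
  forall U, no_isolated U -> P U.
Proof.
move=> P0 Pdel Pedge U; have [n] := ubnP #|U|; elim: n U => // n IH U /ltnSE Un nU.
have [->|U0] := eqVneq U set0; first exact: P0.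
case: (no_isolated_split nU U0) => [[c [y [cU yU ecy nUc]]]|[c [x [cU xU lc lx]]]].
  apply: (Pdel _ _ _ cU yU ecy nUc (IH _ _ nUc)).
  by rewrite (cardsD1 c) cU in Un.
have nU' := no_isolated_del_edge nU lc lx.
apply: (Pedge _ _ _ cU xU lc lx nU' (IH _ _ nU')).
by rewrite -(card_del_edge cU xU (andP lc).1) in Un; apply: ltnW.
Qed.

Lemma indep_count_in2_bound (U : {set 'I_N}) :
  no_isolated U -> 2 * indep_count_in U 2 + 2 * #|U| <= #|U| ^ 2.
Proof.
move: U; apply: no_isolated_ind.
- by have := indep_count_in_le_bin set0 2; rewrite cards0 leqn0 => /eqP->.
- move=> U c y cU yU ecy _ IH; rewrite (indep_count_in_del 1 cU) (cardsD1 c U) cU add1n.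
  have sy : [set y] \subset U :&: [set w | e c w] by rewrite sub1set !inE yU ecy.
  have := card_del_nbr_gt0 yU ecy.
  have := indep_count_in_nbhd_le 1 sy; rewrite cards1 bin1; move: IH.
  move: #|_| (indep_count_in _ 2) (indep_count_in _ 1) => k b a; nia.
- move=> U c x cU xU lc lx _ IH; rewrite (indep_count_in_edge 0 cU xU lc lx).
  rewrite -(card_del_edge cU xU (andP lc).1).
  have := indep_count_in_le_bin (U :\: [set c; x]) 1; rewrite bin1; move: IH.
  move: #|_| (indep_count_in _ 2) (indep_count_in _ 1) => k b a; nia.
Qed.

Lemma indep_count_in_edge_le (U : {set 'I_N}) c x t :
  c \in U -> x \in U -> leaf_at U c x -> leaf_at U x c ->
  no_isolated (U :\: [set c; x]) -> (forall s, 3 <= s ->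
     indep_count_in (U :\: [set c; x]) s <= 'C(#|U :\: [set c; x]|.-1, s)) ->
  3 <= t -> indep_count_in U t + (t < #|U|) <= 'C(#|U|.-1, t).
Proof.
move=> cU xU lc lx nU' le_star t3; have bound2 := indep_count_in2_bound nU'.
rewrite -(card_del_edge cU xU (andP lc).1) /=.
case: t t3 => [|[|[|[|s]]]] // _; rewrite (indep_count_in_edge _ cU xU lc lx).
  have := le_star 3 isT; move: bound2; set U' := U :\: _.
  move: #|U'| (indep_count_in U' 3) (indep_count_in U' 2) => [|[|k]] A B /=.
  - by rewrite !bin0n; lia.
  - lia.
  - rewrite binSS double_bin2 bin1 /=; nia.
have := le_star s.+4 isT; have := le_star s.+3 isT; set U' := U :\: _.
move: #|U'| (indep_count_in U' s.+4) (indep_count_in U' s.+3) => [|k] A B /=.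
  by rewrite !bin0n; lia.
rewrite binSS !ltnS; have : 0 < 'C(k, s.+2) = (s.+1 < k) by rewrite bin_gt0.
case: (s.+1 < k); lia.
Qed.

Lemma indep_count_in_le_star (U : {set 'I_N}) :
  no_isolated U -> forall t, 3 <= t -> indep_count_in U t <= 'C(#|U|.-1, t).
Proof.
move: U; apply: no_isolated_ind.
- move=> t t3; have := indep_count_in_le_bin set0 t.
  by rewrite cards0 bin0n; case: t t3.
- move=> U c y cU yU ecy _ IH [|t] // t3.
  rewrite (indep_count_in_del t cU) (cardsD1 c U) cU add1n /=.
  have sy : [set y] \subset U :&: [set w | e c w] by rewrite sub1set !inE yU ecy.
  have := indep_count_in_nbhd_le t sy; have := IH _ t3.
  have := card_del_nbr_gt0 yU ecy; rewrite cards1.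
  move: #|_| (indep_count_in _ t.+1) (indep_count_in _ t) => [|k] // A B _.
  by rewrite binS subn1 /=; lia.
- move=> U c x cU xU lc lx nU' IH t t3.
  exact: leq_trans (leq_addr _ _) (indep_count_in_edge_le cU xU lc lx nU' IH t3).
Qed.

Lemma star_at_of_independent (U : {set 'I_N}) y :
  no_isolated U -> independent e (U :\ y) -> star_at U y.
Proof.
move=> /no_isolatedP nU /independentP iU.
have to_y v : v \in U -> v != y -> e v y.
  move=> vU vy; have [w wU evw] := nU v vU.
  case: (eqVneq w y) => [<- //|wy].
  by have := iU v w; rewrite !inE vy wy vU wU evw => /(_ isT isT).
apply/forall_inP => a aU; apply/forall_inP => b bU; apply/eqP.
case: (eqVneq a b) => [->|ab]; first by rewrite e_irr.
case: (eqVneq a y) => [ay|ay]; case: (eqVneq b y) => [by'|by'] /=.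
- by move: ab; rewrite ay by' eqxx.
- by rewrite ay e_sym to_y.
- by rewrite by' to_y.
- by apply/negbTE/iU; rewrite !inE ?ay ?by'.
Qed.

Lemma indep_count_in_lt_star_deg2 (U : {set 'I_N}) c y z t :
  c \in U -> y \in U -> z \in U -> e c y -> e c z -> y != z ->
  no_isolated (U :\ c) -> 3 <= t < #|U| -> indep_count_in U t < 'C(#|U|.-1, t).
Proof.
move=> cU yU zU ecy ecz yz nUc; case: t => [|[|[|u]]] // /andP[_ tU].
have syz : [set y; z] \subset U :&: [set w | e c w].
  by rewrite subUset !sub1set !inE yU zU ecy ecz.
have := indep_count_in_nbhd_le u.+2 syz; have := indep_count_in_le_star nUc (isT : 3 <= u.+3).
rewrite (indep_count_in_del u.+2 cU) (cardsD1 c U) cU add1n /= cards2 yz /=.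
rewrite (cardsD1 c U) cU add1n ltnS in tU.
move: #|_| (indep_count_in _ u.+3) (indep_count_in _ u.+2) tU => [|[|k]] A B // tk.
rewrite subn2 /= !binS.
have : 0 < 'C(k, u.+1) by rewrite bin_gt0; lia.
lia.
Qed.

Lemma indep_count_in_lt_star_leaf (U : {set 'I_N}) c y z t :
  c \in U -> y \in U -> z \in U -> leaf_at U c y -> e y z -> z != c ->
  no_isolated U -> ~~ star_at U y -> 3 <= t < #|U| ->
  indep_count_in U t < 'C(#|U|.-1, t).
Proof.
move=> cU yU zU lc eyz zc nU nstar; case: t => // t /andP[t3 tU].
have eyc : e y c by rewrite e_sym (andP lc).1.
have [a [b [aW bW eab]]] : exists a b,
    [/\ a \in U :\: [set y; c], b \in U :\: [set y; c] & e a b].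
  have /forall_inPn[a aUy /forall_inPn[b bUy /negPn eab]] :
    ~~ independent e (U :\ y) by apply: contra nstar; exact: star_at_of_independent.
  case/leaf_atP: lc => _ Nc.
  move: aUy bUy; rewrite !inE => /andP[ay aU] /andP[by' bU].
  exists a, b; split; rewrite // !inE negb_or ?ay ?by' ?aU ?bU ?andbT /=.
    by apply: (contraNneq _ by') => ac; apply/eqP; apply: Nc bU _; rewrite -ac.
  by apply: (contraNneq _ ay) => bc; apply/eqP; apply: Nc aU _; rewrite -bc e_sym.
have lt_W := indep_count_in_lt_bin (t := t) aW bW eab.
have := indep_count_in_le_star (no_isolated_del_leaf nU lc zU eyz zc) t3.
have cardUc : #|U :\ c| = #|U :\: [set y; c]|.+1.
  by have := cardsD1 c U; rewrite cU add1n -(card_del_edge yU cU eyc) => -[].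
rewrite (indep_count_in_del t cU) (leaf_del_closed_nbhd lc) setDDl.
rewrite (cardsD1 c U) cU add1n cardUc /=.
rewrite -(card_del_edge yU cU eyc) !ltnS in tU.
move: #|_| (indep_count_in _ t.+1) (indep_count_in _ t) tU lt_W => k A B tk lt_B.
by move=> le_A; rewrite binS -addnS leq_add // lt_B // tk andbT.
Qed.

Lemma indep_count_in_lt_star (U : {set 'I_N}) t :
  no_isolated U -> 3 <= t < #|U| -> {in U, forall c, ~~ star_at U c} ->
  indep_count_in U t < 'C(#|U|.-1, t).
Proof.
move=> nU tb nstar; have /andP[t3 tU] := tb.
case: (boolP [exists x in U, exists y in U, leaf_at U x y]) => [|nleaf].
  case/exists_inP => c cU /exists_inP[y yU lc].
  have eyc : e y c by rewrite e_sym (andP lc).1.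
  case: (boolP (leaf_at U y c)) => ly.
    have nU' := no_isolated_del_edge nU lc ly.
    have := indep_count_in_edge_le cU yU lc ly nU' (indep_count_in_le_star nU') t3.
    by rewrite tU addn1.
  have [z zU /andP[eyz zc]] := nonleaf_nbr eyc ly.
  exact: indep_count_in_lt_star_leaf cU yU zU lc eyz zc nU (nstar y yU) tb.
have [c cU] : exists c, c \in U by apply/set0Pn; rewrite -card_gt0; lia.
have [y yU ecy] := no_isolatedP _ nU c cU.
have [z zU /andP[ecz zy]] := nonleaf_nbr ecy (exists_inPn (exists_inPn nleaf c cU) y yU).
apply: indep_count_in_lt_star_deg2 cU yU zU ecy ecz _ (no_isolated_del_nonleaf c nU nleaf) tb.
by rewrite eq_sym.
Qed.

End IndependentSets.

Lemma indep_count_star m t : 2 <= t -> indep_count (@star_rel m) t = 'C(m, t).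
Proof.
move=> t2; have cardT0 : #|[set~ ord0 : 'I_m.+1]| = m by rewrite cardsC1 card_ord.
rewrite -[X in 'C(X, t)]cardT0 -cards_draws; apply: eq_card => S; rewrite !inE.
case/boolP: (#|S| == t) => [/eqP cS|]; rewrite ?andbF ?andbT //.
apply/idP/idP => [/independentP iS|/subsetP sS].
  apply/subsetP => x xS; rewrite !inE; apply: contraTneq xS => ->; apply/negP => S0.
  have : 0 < #|S :\ ord0|.
    by move: t2; rewrite -cS (cardsD1 ord0) S0 add1n ltnS.
  rewrite card_gt0 => /set0Pn [y /setD1P[y0 yS]].
  by have := iS _ _ S0 yS; rewrite /star_rel eq_sym y0 eqxx.
apply/independentP => x y /sS + /sS; rewrite !inE /star_rel => x0 y0.
by rewrite (negbTE x0) (negbTE y0) andbF.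
Qed.

Lemma star_at_iso m (e : rel 'I_m.+1) c :
  star_at e [set: 'I_m.+1] c -> graph_iso e (@star_rel m).
Proof.
move=> st; exists (tperm c ord0); split; first by exists (tperm c ord0) => z; rewrite tpermK.
have to0 z : (tperm c ord0 z == ord0) = (z == c).
  by rewrite -(inj_eq (@perm_inj _ (tperm c ord0)) z c) tpermL.
move=> x y; rewrite /star_rel (inj_eq perm_inj) !to0.
by have /forall_inP/(_ x (in_setT x))/forall_inP/(_ y (in_setT y))/eqP := st.
Qed.

Theorem mainTheorem6 (m t : nat) (e : rel 'I_m.+1) :
  4 <= m.+1 -> 3 <= t <= m ->
  simple_graph e ->
  (forall v, 1 <= degree e v) ->
  ~ graph_iso e (@star_rel m) ->
  indep_count e t < indep_count (@star_rel m) t.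
Proof.
(* [4 <= n] is implied by [3 <= t <= n - 1]. *)
move=> _ tb [e_sym e_irr] deg niso.
have cardT : #|[set: 'I_m.+1]| = m.+1 by rewrite cardsT card_ord.
rewrite indep_count_star; last by case/andP: tb => /ltnW.
have -> : indep_count e t = indep_count_in e [set: 'I_m.+1] t.
  by apply: eq_card => S; rewrite !inE subsetT.
have := @indep_count_in_lt_star _ e e_sym e_irr [set: 'I_m.+1] t; rewrite cardT.
apply=> // [|c _]; last by apply/negP => /star_at_iso/niso.
apply/no_isolatedP => v _; have := deg v; rewrite card_gt0 => /set0Pn [w].
by rewrite inE => evw; exists w.
Qed.
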